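(* For $n\ge1$, let $X_n$ be the set of planar rooted trees with $n$ leaves having no vertices with exactly one or exactly two inputs, in which every vertex with $k$ inputs is labelled by an element of $\{1,\dots,k-2\}$. Then $\#X_n=F_{n-1}$, where the Fine numbers $F_k$ are defined by $\sum_{n\ge1}F_{n-1}x^n=\frac{1+2x-\sqrt{1-4x}}{2(2+x)}$.
   Context: For $n=1$, $X_1$ consists of the trivial tree (one leaf, no vertex). *)

From Stdlib Require Import Reals List Lia.
From Coquelicot Require Import Coquelicot.
Open Scope R_scope.

Inductive ptree : Type :=
| Leaf : ptree
| Node : nat -> list ptree -> ptree.

Fixpoint leaves (t : ptree) : nat :=
  match t with
  | Leaf => 1%nat
  | Node _ ch =>
      (fix lv (c : list ptree) : nat :=
         match c with nil => 0%nat | s :: c' => (leaves s + lv c')%nat end) ch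
  end.

(* Membership in X: every vertex with k inputs has k <> 1, k <> 2, and its
   label lies in {1, ..., k-2} (which forces k >= 3). *)
Fixpoint in_X (t : ptree) : Prop :=
  match t with
  | Leaf => True
  | Node l ch =>
      length ch <> 1%nat /\ length ch <> 2%nat /\
      (1 <= l)%nat /\ (l <= length ch - 2)%nat /\
      (fix vl (c : list ptree) : Prop :=
         match c with nil => True | s :: c' => in_X s /\ vl c' end) ch
  end.

(* F is the Fine sequence: sum_{n>=1} F_{n-1} x^n = (1+2x-sqrt(1-4x))/(2(2+x))
   as power series, i.e. for all x in a neighbourhood of 0. *)
Definition fine_gf (F : nat -> R) : Prop :=
  exists r : R, 0 < r /\
    forall x : R, Rabs x < r ->
      is_series (fun n : nat => match n with
                                | O => 0
                                | S m => F m * x ^ n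
                                end)
                ((1 + 2 * x - sqrt (1 - 4 * x)) / (2 * (2 + x))).

(* A vertex with k inputs and label l in {1, ..., k-2} amounts to cutting its list
   of inputs into a nonempty prefix (of length l) and a suffix of at least two trees.
   So if T and P are the generating functions, by number of leaves, of the trees of X
   and of the nonempty forests of such trees, then
     T = x + P T P   and   P = T + T P,
   hence (T - x) (1 - T)^2 = T^3, that is (2 + x) T^2 - (1 + 2 x) T + x = 0.  Since
   T_0 = 0, this equation determines the coefficients of T recursively; the Fine
   generating function is a root of the same quadratic near 0, so by the identity
   theorem for power series it has the same coefficients.  The trees themselves are
   listed without repetition by a recursion on the number of leaves that follows the
   same decomposition. *)

From Stdlib Require Import Reals List Lia Lra Permutation FunctionalExtensionality.
From Coquelicot Require Import Rbar Hierarchy Lim_seq Series PSeries.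
Import ListNotations.
Open Scope R_scope.

(** * Finite enumerations *)

Definition enumerates {A : Type} (P : A -> Prop) (l : list A) : Prop :=
  NoDup l /\ forall x, In x l <-> P x.

Section Enumerations.

Context {A B : Type}.

Lemma enumerates_length (P : A -> Prop) l l' :
  enumerates P l -> enumerates P l' -> length l = length l'.
Proof.
  intros [Hl Hin] [Hl' Hin']. apply Permutation_length, NoDup_Permutation; auto.
  intros x. rewrite Hin, Hin'. reflexivity.
Qed.

Lemma enumerates_ext (P Q : A -> Prop) l :
  (forall x, P x <-> Q x) -> enumerates P l -> enumerates Q l.
Proof. intros HPQ [Hl Hin]. split; [exact Hl|]. intros x. rewrite Hin. apply HPQ. Qed.

Lemma enumerates_app (P Q : A -> Prop) l l' :
  (forall x, P x -> Q x -> False) -> enumerates P l -> enumerates Q l' ->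
  enumerates (fun x => P x \/ Q x) (l ++ l').
Proof.
  intros Hdisj [Hl Hin] [Hl' Hin']. split.
  - apply NoDup_app; auto. intros x Hx Hx'. apply (Hdisj x); [apply Hin | apply Hin']; auto.
  - intros x. rewrite in_app_iff, Hin, Hin'. reflexivity.
Qed.

Lemma enumerates_map (P : A -> Prop) (f : A -> B) l :
  (forall x y, f x = f y -> x = y) -> enumerates P l ->
  enumerates (fun y => exists x, P x /\ f x = y) (map f l).
Proof.
  intros Hf [Hl Hin]. split.
  - apply NoDup_map_NoDup_ForallPairs; [intros x y _ _; apply Hf | exact Hl].
  - intros y. rewrite in_map_iff.
    split; intros [x Hx]; exists x; rewrite Hin in *; tauto.
Qed.

Lemma enumerates_prod (P : A -> Prop) (Q : B -> Prop) l l' :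
  enumerates P l -> enumerates Q l' ->
  enumerates (fun p => P (fst p) /\ Q (snd p)) (list_prod l l').
Proof.
  intros [Hl Hin] [Hl' Hin']. split.
  - clear Hin. induction Hl as [|x l Hx Hl IH]; [constructor|]. apply NoDup_app.
    + apply NoDup_map_NoDup_ForallPairs; [|exact Hl'].
      intros y y' _ _ E. injection E; auto.
    + exact IH.
    + intros p Hp Hp'. apply in_map_iff in Hp as [y [<- _]].
      apply in_prod_iff in Hp' as [Hx' _]. contradiction.
  - intros [x y]. rewrite in_prod_iff, Hin, Hin'. reflexivity.
Qed.

Lemma enumerates_flat_map {I : Type} (P : I -> A -> Prop) (f : I -> list A) idx :
  (forall i j x, P i x -> P j x -> i = j) -> NoDup idx ->
  (forall i, In i idx -> enumerates (P i) (f i)) ->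
  enumerates (fun x => exists i, In i idx /\ P i x) (flat_map f idx).
Proof.
  intros Hdisj Hidx Hf. split.
  - induction Hidx as [|i idx Hi Hidx IH]; [constructor|]. simpl. apply NoDup_app.
    + apply Hf. left. reflexivity.
    + apply IH. intros j Hj. apply Hf. right. exact Hj.
    + intros x Hx Hx'. apply in_flat_map in Hx' as [j [Hj Hx']].
      apply Hf in Hx; [|left; reflexivity]. apply Hf in Hx'; [|right; exact Hj].
      rewrite (Hdisj i j x Hx Hx') in Hi. contradiction.
  - intros x. rewrite in_flat_map. split; intros [i [Hi Hx]]; exists i;
      split; auto; apply (Hf i Hi); exact Hx.
Qed.

End Enumerations.

(** * Decomposition of trees *)

Lemma ptree_Forall_ind (P : ptree -> Prop) :
  P Leaf -> (forall l ch, Forall P ch -> P (Node l ch)) -> forall t, P t.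
Proof.
  intros HL HN. fix IH 1. intros [|l ch]; [exact HL|]. apply HN.
  induction ch as [|s ch IHch]; constructor; auto.
Qed.

Definition forest_leaves (f : list ptree) : nat := list_sum (map leaves f).

Lemma leaves_Node l ch : leaves (Node l ch) = forest_leaves ch.
Proof.
  induction ch as [|s ch IH]; [reflexivity|]. simpl in *. rewrite IH. reflexivity.
Qed.

Lemma forest_leaves_cons t f : forest_leaves (t :: f) = (leaves t + forest_leaves f)%nat.
Proof. reflexivity. Qed.

Lemma forest_leaves_app f g : forest_leaves (f ++ g) = (forest_leaves f + forest_leaves g)%nat.
Proof. unfold forest_leaves. rewrite map_app. apply list_sum_app. Qed.

Lemma in_X_Node l ch :
  in_X (Node l ch) <-> ((1 <= l)%nat /\ (l + 2 <= length ch)%nat) /\ Forall in_X ch.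
Proof.
  assert (Hch : (fix vl (c : list ptree) : Prop :=
            match c with nil => True | s :: c' => in_X s /\ vl c' end) ch <-> Forall in_X ch).
  { induction ch as [|s ch IH]; [split; auto|]. rewrite Forall_cons_iff, IH. reflexivity. }
  simpl. rewrite Hch.
  split; [intros (_ & _ & Hl1 & Hl2 & Hch') | intros ((Hl1 & Hl2) & Hch')]; repeat split; auto; lia.
Qed.

Lemma forest_leaves_ge_length f :
  Forall (fun t => 1 <= leaves t)%nat f -> (length f <= forest_leaves f)%nat.
Proof. induction 1; rewrite ?forest_leaves_cons; simpl; lia. Qed.

Lemma leaves_pos t : in_X t -> (1 <= leaves t)%nat.
Proof.
  induction t as [|l ch IH] using ptree_Forall_ind; [simpl; lia|].
  rewrite in_X_Node, leaves_Node. intros [Hl Hch].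
  enough (length ch <= forest_leaves ch)%nat by lia.
  apply forest_leaves_ge_length.
  rewrite Forall_forall in *. auto.
Qed.

Lemma length_le_forest_leaves f : Forall in_X f -> (length f <= forest_leaves f)%nat.
Proof. intros H. apply forest_leaves_ge_length. exact (Forall_impl _ leaves_pos H). Qed.

Definition is_tree (n : nat) (t : ptree) : Prop := in_X t /\ leaves t = n.

Definition is_forest (k n : nat) (f : list ptree) : Prop :=
  (k <= length f)%nat /\ Forall in_X f /\ forest_leaves f = n.

Definition node_of_parts (p : list ptree * list ptree) : ptree :=
  Node (length (fst p)) (fst p ++ snd p).

Definition cons_pair (p : ptree * list ptree) : list ptree := fst p :: snd p.

Lemma node_of_parts_inj p q : node_of_parts p = node_of_parts q -> p = q.
Proof.
  destruct p as [f g], q as [f' g']. unfold node_of_parts; simpl.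
  intros E. injection E as Hlen Happ.
  assert (f = f') as <-.
  { apply (f_equal (firstn (length f))) in Happ.
    rewrite firstn_app, Nat.sub_diag, firstn_O, app_nil_r, firstn_all in Happ.
    rewrite Hlen, firstn_app, Nat.sub_diag, firstn_O, app_nil_r, firstn_all in Happ.
    exact Happ. }
  apply app_inv_head in Happ. subst. reflexivity.
Qed.

Lemma cons_pair_inj p q : cons_pair p = cons_pair q -> p = q.
Proof. destruct p, q. unfold cons_pair. simpl. intros E. injection E as -> ->. reflexivity. Qed.

Lemma is_tree_iff n t :
  is_tree n t <->
  (n = 1%nat /\ t = Leaf) \/
  exists i, In i (seq 1 (n - 1)) /\
    exists p, (is_forest 1 i (fst p) /\ is_forest 2 (n - i) (snd p)) /\ node_of_parts p = t.
Proof.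
  split.
  - intros [Ht Hn]. destruct t as [|l ch]; [left; simpl in Hn; auto|right].
    apply in_X_Node in Ht as [[Hl Hlen] Hch]. rewrite leaves_Node in Hn.
    set (pre := firstn l ch). set (suf := skipn l ch).
    assert (Hpre : length pre = l) by (unfold pre; rewrite length_firstn; lia).
    assert (Ech : ch = pre ++ suf) by (symmetry; apply firstn_skipn).
    rewrite Ech in Hch, Hn, Hlen |- *. rewrite length_app in Hlen.
    rewrite forest_leaves_app in Hn. apply Forall_app in Hch as [Hpre_X Hsuf_X].
    pose proof (length_le_forest_leaves _ Hpre_X). pose proof (length_le_forest_leaves _ Hsuf_X).
    exists (forest_leaves pre). split; [apply in_seq; lia|].
    exists (pre, suf). unfold node_of_parts, is_forest. simpl. rewrite Hpre.
    repeat split; auto; lia.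
  - intros [[-> ->] | (i & Hi & [pre suf] &
                       ((Hpre & Hpre_X & Hpre_n) & (Hsuf & Hsuf_X & Hsuf_n)) & <-)].
    + split; [exact I | reflexivity].
    + apply in_seq in Hi. unfold node_of_parts, is_tree. cbn [fst snd] in *.
      rewrite in_X_Node, leaves_Node, length_app, forest_leaves_app, Forall_app.
      repeat split; auto; lia.
Qed.

Lemma is_forest2_iff m f :
  is_forest 2 m f <->
  exists j, In j (seq 1 (m - 1)) /\
    exists p, (is_tree j (fst p) /\ is_forest 1 (m - j) (snd p)) /\ cons_pair p = f.
Proof.
  split.
  - intros (Hlen & Hf & Hm). destruct f as [|t g]; [simpl in Hlen; lia|].
    apply Forall_cons_iff in Hf as [Ht Hg]. rewrite forest_leaves_cons in Hm.
    pose proof (leaves_pos t Ht). pose proof (length_le_forest_leaves g Hg). simpl in Hlen.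
    exists (leaves t). split; [apply in_seq; lia|].
    exists (t, g). unfold is_tree, is_forest. simpl. repeat split; auto; lia.
  - intros (j & Hj & [t g] & ((Ht & Htj) & (Hg & Hg_X & Hgm)) & <-).
    apply in_seq in Hj. unfold is_forest, cons_pair. simpl in *.
    rewrite forest_leaves_cons. repeat split; auto; lia.
Qed.

Lemma is_forest1_iff n f :
  is_forest 1 n f <-> (exists t, is_tree n t /\ [t] = f) \/ is_forest 2 n f.
Proof.
  split.
  - intros (Hlen & Hf & Hn). destruct f as [|t [|u g]]; simpl in Hlen; [lia| left | right].
    + exists t. apply Forall_cons_iff in Hf as [Ht _].
      unfold forest_leaves in Hn. simpl in Hn. repeat split; auto; lia.
    + repeat split; auto. simpl. lia.
  - intros [(t & (Ht & Hn) & <-) | (Hlen & Hf & Hn)].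
    + repeat split; auto. unfold forest_leaves. simpl. lia.
    + repeat split; auto. lia.
Qed.

(** * Listing the trees by number of leaves *)

Definition tables_correct (T : nat -> list ptree) (L : nat -> list (list ptree)) (N : nat) : Prop :=
  forall n, (n < N)%nat -> enumerates (is_tree n) (T n) /\ enumerates (is_forest 1 n) (L n).

Section Tables.

Variables (T : nat -> list ptree) (L : nat -> list (list ptree)).

Definition forests2_step (m : nat) : list (list ptree) :=
  flat_map (fun j => map cons_pair (list_prod (T j) (L (m - j)))) (seq 1 (m - 1)).

Definition trees_step (n : nat) : list ptree :=
  (if (n =? 1)%nat then [Leaf] else []) ++
  flat_map (fun i => map node_of_parts (list_prod (L i) (forests2_step (n - i)))) (seq 1 (n - 1)).

Definition forests_step (n : nat) : list (list ptree) :=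
  map (fun t => [t]) (trees_step n) ++ forests2_step n.

Variable N : nat.
Hypothesis HTL : tables_correct T L N.

Lemma forests2_step_enum m : (m <= N)%nat -> enumerates (is_forest 2 m) (forests2_step m).
Proof.
  intros Hm. eapply enumerates_ext; [intros f; symmetry; apply is_forest2_iff|].
  apply enumerates_flat_map; [| apply seq_NoDup |].
  - intros j j' f (p & (Hp & _) & <-) (p' & (Hp' & _) & E).
    apply cons_pair_inj in E as ->. destruct Hp, Hp'. congruence.
  - intros j Hj. apply in_seq in Hj. apply enumerates_map; [apply cons_pair_inj|].
    apply enumerates_prod; apply HTL; lia.
Qed.

Lemma trees_step_enum : enumerates (is_tree N) (trees_step N).
Proof.
  eapply enumerates_ext; [intros t; symmetry; apply is_tree_iff|].
  apply enumerates_app.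
  - intros t [_ ->] (i & _ & p & _ & E). discriminate.
  - destruct (Nat.eqb_spec N 1) as [->|HN]; split.
    + repeat constructor. intros [].
    + intros t. simpl. intuition congruence.
    + constructor.
    + intros t. simpl. intuition.
  - apply enumerates_flat_map; [| apply seq_NoDup |].
    + intros i i' t (p & (Hp & _) & <-) (p' & (Hp' & _) & E).
      apply node_of_parts_inj in E as ->.
      destruct Hp as (_ & _ & ?), Hp' as (_ & _ & ?). congruence.
    + intros i Hi. apply in_seq in Hi. apply enumerates_map; [apply node_of_parts_inj|].
      apply enumerates_prod; [apply HTL; lia | apply forests2_step_enum; lia].
Qed.

Lemma forests_step_enum : enumerates (is_forest 1 N) (forests_step N).
Proof.
  eapply enumerates_ext; [intros f; symmetry; apply is_forest1_iff|].
  apply enumerates_app.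
  - intros f (t & _ & <-) (Hlen & _). simpl in Hlen. lia.
  - apply enumerates_map; [intros t t' E; injection E; auto | exact trees_step_enum].
  - apply forests2_step_enum. lia.
Qed.

End Tables.

(* tables k lists the trees and the nonempty forests with fewer than k leaves; the bound k
   makes the recursion on the number of leaves structural. *)
Fixpoint tables (k : nat) : (nat -> list ptree) * (nat -> list (list ptree)) :=
  match k with
  | O => (fun _ => [], fun _ => [])
  | S k => (trees_step (fst (tables k)) (snd (tables k)),
            forests_step (fst (tables k)) (snd (tables k)))
  end.

Lemma tables_correct_all k : tables_correct (fst (tables k)) (snd (tables k)) k.
Proof.
  induction k as [|k IH]; intros n Hn; [lia|].
  assert (H : tables_correct (fst (tables k)) (snd (tables k)) n) by (intros m Hm; apply IH; lia).
  split; [apply trees_step_enum | apply forests_step_enum]; exact H.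
Qed.

Definition trees (n : nat) : list ptree := fst (tables (S n)) n.
Definition forests (n : nat) : list (list ptree) := snd (tables (S n)) n.

Lemma trees_enum n : enumerates (is_tree n) (trees n).
Proof. apply (tables_correct_all (S n)). lia. Qed.

Lemma forests_enum n : enumerates (is_forest 1 n) (forests n).
Proof. apply (tables_correct_all (S n)). lia. Qed.

Lemma length_tables k n : (n < k)%nat ->
  length (fst (tables k) n) = length (trees n) /\ length (snd (tables k) n) = length (forests n).
Proof.
  intros Hn. destruct (tables_correct_all k n Hn) as [HT HL].
  split; eapply enumerates_length; eauto using trees_enum, forests_enum.
Qed.

(** * Formal power series *)

Definition ps_add (a b : nat -> R) : nat -> R := fun n => a n + b n.
Definition ps_opp (a : nat -> R) : nat -> R := fun n => - a n.
Definition ps_sub (a b : nat -> R) : nat -> R := ps_add a (ps_opp b).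
Definition ps_zero : nat -> R := fun _ => 0.
Definition ps_one : nat -> R := fun n => match n with O => 1 | S _ => 0 end.
Definition ps_X : nat -> R := fun n => if (n =? 1)%nat then 1 else 0.

Declare Scope ps_scope.
Delimit Scope ps_scope with ps.
Infix "+" := ps_add : ps_scope.
Infix "-" := ps_sub : ps_scope.
Notation "- a" := (ps_opp a) : ps_scope.
Infix "*" := PS_mult : ps_scope.

Definition vanishes_above (a : nat -> R) (N : nat) : Prop := forall k, (N < k)%nat -> a k = 0.

Lemma CV_radius_ge_of_lim0 a x :
  is_lim_seq (fun n => a n * x ^ n) 0 -> Rbar_le (Rabs x) (CV_radius a).
Proof. intros H. apply Rbar_not_lt_le. intros Hlt. exact (CV_disk_outside a x Hlt H). Qed.

Lemma CV_radius_ge_of_ex_pseries a x : ex_pseries a x -> Rbar_le (Rabs x) (CV_radius a).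
Proof.
  intros H. apply CV_radius_ge_of_lim0. apply ex_series_lim_0 in H.
  eapply is_lim_seq_ext; [|exact H]. intros n. simpl. rewrite pow_n_pow. apply Rmult_comm.
Qed.

Lemma CV_radius_gt_of_is_pseries a f r x :
  (forall y, Rabs y < r -> is_pseries a y (f y)) -> Rabs x < r -> Rbar_lt (Rabs x) (CV_radius a).
Proof.
  intros Ha Hx. set (y := (Rabs x + r) / 2). pose proof (Rabs_pos x).
  assert (Hy : Rabs y = y) by (apply Rabs_pos_eq; unfold y; lra).
  assert (Hyr : Rabs y < r) by (rewrite Hy; unfold y; lra).
  eapply Rbar_lt_le_trans; [|apply CV_radius_ge_of_ex_pseries; exists (f y); exact (Ha y Hyr)].
  rewrite Hy. simpl. unfold y. lra.
Qed.

Lemma CV_radius_vanishes_above a N : vanishes_above a N -> CV_radius a = p_infty.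
Proof.
  intros Ha.
  assert (Hle : forall x, Rbar_le (Rabs x) (CV_radius a)).
  { intros x. apply CV_radius_ge_of_lim0.
    apply is_lim_seq_ext_loc with (fun _ => 0); [|apply is_lim_seq_const].
    exists (S N). intros n Hn. rewrite Ha by lia. ring. }
  destruct (CV_radius a) as [c| |]; [| reflexivity |].
  - specialize (Hle (Rabs c + 1)). simpl in Hle.
    pose proof (Rle_abs c). pose proof (Rabs_pos c).
    rewrite Rabs_pos_eq in Hle by lra. lra.
  - destruct (Hle 0).
Qed.

Lemma vanishes_above_in_disk a N x : vanishes_above a N -> Rbar_lt (Rabs x) (CV_radius a).
Proof. intros Ha. rewrite (CV_radius_vanishes_above a N Ha). exact I. Qed.

Lemma is_pseries_vanishes_above a N x :
  vanishes_above a N -> is_pseries a x (sum_f_R0 (fun k => a k * x ^ k) N).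
Proof.
  intros Ha. apply is_pseries_R, is_series_Reals. intros eps Heps. exists N. intros n Hn.
  replace (sum_f_R0 _ n) with (sum_f_R0 (fun k => a k * x ^ k) N).
  { unfold R_dist. rewrite Rminus_diag, Rabs_R0. exact Heps. }
  induction Hn as [|n Hn IH]; [reflexivity|]. simpl. rewrite <- IH, Ha by lia. ring.
Qed.

Lemma vanishes_above_PS_mult a b N M :
  vanishes_above a N -> vanishes_above b M -> vanishes_above (PS_mult a b) (N + M).
Proof.
  intros Ha Hb k Hk. unfold PS_mult. rewrite <- (sum_eq (fun _ => 0)), sum_cte; [ring|].
  intros i Hi. destruct (Nat.le_gt_cases i N).
  - rewrite (Hb (k - i)%nat) by lia. ring.
  - rewrite Ha by lia. ring.
Qed.

Lemma PS_mult_coef_ext a b a' b' n :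
  (forall k, (k <= n)%nat -> a k = a' k) -> (forall k, (k <= n)%nat -> b k = b' k) ->
  PS_mult a b n = PS_mult a' b' n.
Proof. intros Ha Hb. apply sum_eq. intros i Hi. rewrite Ha, Hb by lia. reflexivity. Qed.

Definition ps_trunc (N : nat) (a : nat -> R) : nat -> R :=
  fun k => if (k <=? N)%nat then a k else 0.

Lemma ps_trunc_vanishes_above N a : vanishes_above (ps_trunc N a) N.
Proof. intros k Hk. unfold ps_trunc. destruct (Nat.leb_spec k N); [lia | reflexivity]. Qed.

Lemma ps_trunc_eq N a k : (k <= N)%nat -> a k = ps_trunc N a k.
Proof. intros Hk. unfold ps_trunc. destruct (Nat.leb_spec k N); [reflexivity | lia]. Qed.

Lemma coef_eq_of_PSeries_eq a b N M n :
  vanishes_above a N -> vanishes_above b M -> (forall x, PSeries a x = PSeries b x) -> a n = b n.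
Proof.
  intros Ha Hb H. apply PSeries_ext_recip.
  - rewrite (CV_radius_vanishes_above a N Ha). exact I.
  - rewrite (CV_radius_vanishes_above b M Hb). exact I.
  - exists (mkposreal 1 Rlt_0_1). intros x _. apply H.
Qed.

(* Commutativity and associativity of the Cauchy product reduce to those of
   multiplication in R, through the power series of truncations. *)
Lemma PS_mult_comm a b : (a * b = b * a)%ps.
Proof.
  apply functional_extensionality. intros n.
  pose proof (ps_trunc_vanishes_above n a) as Ha. pose proof (ps_trunc_vanishes_above n b) as Hb.
  rewrite (PS_mult_coef_ext a b (ps_trunc n a) (ps_trunc n b) n),
    (PS_mult_coef_ext b a (ps_trunc n b) (ps_trunc n a) n) by (intros; apply ps_trunc_eq; lia).
  apply (coef_eq_of_PSeries_eq _ _ (n + n) (n + n)); try apply vanishes_above_PS_mult; auto.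
  intros x. rewrite !PSeries_mult by (eapply vanishes_above_in_disk; eauto). ring.
Qed.

Lemma PS_mult_assoc a b c : (a * (b * c) = a * b * c)%ps.
Proof.
  apply functional_extensionality. intros n.
  pose proof (ps_trunc_vanishes_above n a) as Ha. pose proof (ps_trunc_vanishes_above n b) as Hb.
  pose proof (ps_trunc_vanishes_above n c) as Hc.
  assert (Htrunc : forall u k, (k <= n)%nat -> u k = ps_trunc n u k)
    by (intros; apply ps_trunc_eq; lia).
  rewrite (PS_mult_coef_ext a (b * c)%ps (ps_trunc n a) (ps_trunc n b * ps_trunc n c)%ps n),
    (PS_mult_coef_ext (a * b)%ps c (ps_trunc n a * ps_trunc n b)%ps (ps_trunc n c) n)
    by (intros k Hk; first [apply Htrunc, Hk | apply PS_mult_coef_ext; intros; apply Htrunc; lia]).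
  apply (coef_eq_of_PSeries_eq _ _ (n + (n + n)) (n + n + n));
    repeat apply vanishes_above_PS_mult; auto.
  intros x.
  rewrite !PSeries_mult by (eapply vanishes_above_in_disk; eauto using vanishes_above_PS_mult).
  ring.
Qed.

Lemma PS_mult_one_l a : (ps_one * a = a)%ps.
Proof.
  apply functional_extensionality. intros n. unfold PS_mult.
  enough (H : forall m, sum_f_R0 (fun k => ps_one k * a (n - k)%nat) m = a n) by apply H.
  intros m. induction m as [|m IH]; simpl; [rewrite Nat.sub_0_r; ring | rewrite IH; ring].
Qed.

Lemma ps_ring : ring_theory ps_zero ps_one ps_add PS_mult ps_sub ps_opp eq.
Proof.
  split; intros;
    [| | | apply PS_mult_one_l | apply PS_mult_comm | apply PS_mult_assoc | | reflexivity |];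
    apply functional_extensionality; intros n; unfold ps_add, ps_sub, ps_opp, ps_zero; try ring.
  unfold PS_mult. rewrite <- sum_plus. apply sum_eq. intros. ring.
Qed.

Add Ring ps_ring : ps_ring.

Lemma PS_mult_coef0 a b : (a * b)%ps 0%nat = a 0%nat * b 0%nat.
Proof. reflexivity. Qed.

(** * Generating functions of trees and forests *)

Lemma INR_list_sum l : INR (list_sum l) = fold_right Rplus 0 (map INR l).
Proof. induction l as [|k l IH]; [reflexivity|]. simpl. rewrite plus_INR, IH. reflexivity. Qed.

Lemma sum_f_R0_seq f n : sum_f_R0 f n = fold_right Rplus 0 (map f (seq 0 (S n))).
Proof.
  revert f. induction n as [|n IH]; intros f; [simpl; ring|].
  rewrite decomp_sum by lia. simpl pred. rewrite IH.
  change (seq 0 (S (S n))) with (0%nat :: seq 1 (S n)).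
  rewrite <- seq_shift, map_cons, map_map. reflexivity.
Qed.

Lemma PS_mult_seq (u v : nat -> R) m : u 0%nat = 0 -> v 0%nat = 0 ->
  (u * v)%ps m = fold_right Rplus 0 (map (fun j => u j * v (m - j)%nat) (seq 1 (m - 1))).
Proof.
  intros Hu Hv. unfold PS_mult. rewrite sum_f_R0_seq.
  destruct m as [|m]; [simpl; rewrite Hu; ring|].
  replace (S m - 1)%nat with m by lia.
  rewrite <- cons_seq, seq_S, map_cons, map_app. cbn [fold_right].
  rewrite fold_right_app. cbn [map fold_right].
  change (1 + m)%nat with (S m).
  rewrite Nat.sub_diag, Nat.sub_0_r, Hu, Hv, Rmult_0_l, Rmult_0_r, Rplus_0_r, Rplus_0_l.
  reflexivity.
Qed.

Definition tree_count (n : nat) : R := INR (length (trees n)).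
Definition forest_count (n : nat) : R := INR (length (forests n)).

Lemma tree_count_0 : tree_count 0 = 0.
Proof. reflexivity. Qed.

Lemma forest_count_0 : forest_count 0 = 0.
Proof. reflexivity. Qed.

Lemma length_forests2_step k m : (m <= k)%nat ->
  INR (length (forests2_step (fst (tables k)) (snd (tables k)) m)) =
  (tree_count * forest_count)%ps m.
Proof.
  intros Hm. unfold forests2_step.
  rewrite length_flat_map, INR_list_sum, map_map, PS_mult_seq
    by (apply tree_count_0 || apply forest_count_0).
  f_equal. apply map_ext_in. intros j Hj. apply in_seq in Hj.
  rewrite length_map, length_prod, mult_INR.
  destruct (length_tables k j) as [-> _]; [lia|].
  destruct (length_tables k (m - j)) as [_ ->]; [lia|].
  reflexivity.
Qed.

Lemma forest_count_eq : (forest_count = tree_count + tree_count * forest_count)%ps.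
Proof.
  apply functional_extensionality. intros n.
  unfold forest_count at 1, forests. cbn [tables fst snd]. unfold forests_step.
  rewrite length_app, length_map, plus_INR, length_forests2_step by lia. reflexivity.
Qed.

Lemma tree_count_eq : (tree_count = ps_X + forest_count * (tree_count * forest_count))%ps.
Proof.
  apply functional_extensionality. intros n.
  unfold tree_count at 1, trees. cbn [tables fst snd]. unfold trees_step.
  rewrite length_app, plus_INR, length_flat_map, INR_list_sum, map_map.
  unfold ps_add, ps_X.
  rewrite PS_mult_seq; [| apply forest_count_0 | rewrite PS_mult_coef0, tree_count_0; ring].
  f_equal; [destruct (n =? 1)%nat; reflexivity|].
  f_equal. apply map_ext_in. intros i Hi. apply in_seq in Hi.
  rewrite length_map, length_prod, mult_INR, length_forests2_step by lia.
  destruct (length_tables n i) as [_ ->]; [lia|]. reflexivity.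
Qed.

(** * The Fine equation *)

Lemma PS_mult_coef_ext_lt a b a' b' n :
  a 0%nat = 0 -> a' 0%nat = 0 -> b 0%nat = 0 -> b' 0%nat = 0 ->
  (forall k, (k < n)%nat -> a k = a' k) -> (forall k, (k < n)%nat -> b k = b' k) ->
  (a * b)%ps n = (a' * b')%ps n.
Proof.
  intros Ha Ha' Hb Hb' HA HB. apply sum_eq. intros i Hi.
  destruct (Nat.eq_dec i 0) as [->|Hi0]; [rewrite Ha, Ha'; ring|].
  destruct (Nat.eq_dec i n) as [->|Hin]; [rewrite Nat.sub_diag, Hb, Hb'; ring|].
  rewrite HA, HB by lia. reflexivity.
Qed.

Definition fine_map (s : nat -> R) : nat -> R :=
  (ps_X + (s * s + s * s) - (ps_X * s + ps_X * s) + ps_X * (s * s))%ps.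

(* From P (1 - T) = T and T - X = T P^2 one gets (T - X) (1 - T)^2 = T^3,
   which is the expanded form of T = fine_map T. *)
Lemma fine_map_of_system T P :
  (T = ps_X + P * (T * P))%ps -> (P = T + T * P)%ps -> T = fine_map T.
Proof.
  intros HT HP.
  assert (E1 : (T - ps_X = P * (T * P))%ps) by (rewrite HT at 1; ring).
  assert (E2 : (P - T * P = T)%ps) by (rewrite HP at 1; ring).
  transitivity (fine_map T + ((T - ps_X) * ((ps_one - T) * (ps_one - T)) - T * (T * T)))%ps.
  2: { rewrite E1. transitivity (fine_map T + T * ((P - T * P) * (P - T * P)) - T * (T * T))%ps.
       - ring.
       - rewrite E2. ring. }
  unfold fine_map. ring.
Qed.

Lemma fine_map_coef_ext s s' n :
  s 0%nat = 0 -> s' 0%nat = 0 -> (forall k, (k < n)%nat -> s k = s' k) ->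
  fine_map s n = fine_map s' n.
Proof.
  intros H0 H0' Hlt.
  assert (Hsq : forall m, (m <= n)%nat -> (s * s)%ps m = (s' * s')%ps m).
  { intros m Hm. apply PS_mult_coef_ext_lt; auto; intros k Hk; apply Hlt; lia. }
  assert (Hsq0 : forall u, u 0%nat = 0 -> (u * u)%ps 0%nat = 0).
  { intros u Hu. rewrite PS_mult_coef0, Hu. ring. }
  unfold fine_map, ps_sub, ps_add, ps_opp.
  rewrite Hsq, (PS_mult_coef_ext_lt ps_X s ps_X s' n),
    (PS_mult_coef_ext_lt ps_X (s * s)%ps ps_X (s' * s')%ps n); auto; intros; apply Hsq; lia.
Qed.

Lemma fine_map_fixpoint_unique s s' :
  s 0%nat = 0 -> s' 0%nat = 0 -> s = fine_map s -> s' = fine_map s' -> s = s'.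
Proof.
  intros H0 H0' Hs Hs'. apply functional_extensionality. intros n.
  induction n as [n IH] using (well_founded_induction Wf_nat.lt_wf).
  rewrite Hs, Hs'. apply fine_map_coef_ext; auto.
Qed.

Lemma PS_mult_X_l u : (ps_X * u)%ps = PS_incr_1 u.
Proof.
  apply functional_extensionality. intros n. unfold PS_mult, ps_X.
  assert (H : forall m, sum_f_R0 (fun k => (if (k =? 1)%nat then 1 else 0) * u (n - k)%nat) m =
                        match m with O => 0 | S _ => u (n - 1)%nat end).
  { intros m. induction m as [|m IH]; [simpl; ring|].
    simpl sum_f_R0. rewrite IH. destruct m; simpl; ring. }
  rewrite H. destruct n as [|n]; [reflexivity|]. simpl. rewrite Nat.sub_0_r. reflexivity.
Qed.

Lemma is_pseries_X x : is_pseries ps_X x x.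
Proof.
  replace x with (sum_f_R0 (fun k => ps_X k * x ^ k) 1) at 2 by (unfold ps_X; simpl; ring).
  apply is_pseries_vanishes_above. intros [|[|k]] Hk; [lia | lia | reflexivity].
Qed.

Lemma is_pseries_X_mult u x l : is_pseries u x l -> is_pseries (ps_X * u)%ps x (x * l).
Proof. intros H. rewrite PS_mult_X_l. exact (is_pseries_incr_1 u x l H). Qed.

Lemma is_pseries_ps_add a b x la lb :
  is_pseries a x la -> is_pseries b x lb -> is_pseries (a + b)%ps x (la + lb).
Proof. exact (is_pseries_plus a b x la lb). Qed.

Lemma is_pseries_ps_sub a b x la lb :
  is_pseries a x la -> is_pseries b x lb -> is_pseries (a - b)%ps x (la - lb).
Proof. intros Ha Hb. exact (is_pseries_plus _ _ x _ _ Ha (is_pseries_opp b x lb Hb)). Qed.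

Definition fine_poly (x y : R) : R := x + 2 * y ^ 2 - 2 * x * y + x * y ^ 2.

Lemma is_pseries_fine_map s x l :
  is_pseries s x l -> Rbar_lt (Rabs x) (CV_radius s) -> is_pseries (fine_map s) x (fine_poly x l).
Proof.
  intros Hs Hx. pose proof (is_pseries_mult s s x l l Hs Hs Hx Hx) as Hss.
  replace (fine_poly x l) with (x + (l * l + l * l) - (x * l + x * l) + x * (l * l))
    by (unfold fine_poly; ring).
  apply is_pseries_ps_add; [apply is_pseries_ps_sub; [apply is_pseries_ps_add|] |].
  - apply is_pseries_X.
  - apply is_pseries_ps_add; exact Hss.
  - apply is_pseries_ps_add; apply is_pseries_X_mult, Hs.
  - apply is_pseries_X_mult, Hss.
Qed.

Definition fine_fun (x : R) : R := (1 + 2 * x - sqrt (1 - 4 * x)) / (2 * (2 + x)).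

Lemma fine_fun_fixpoint x : x <= 1 / 4 -> x <> -2 -> fine_fun x = fine_poly x (fine_fun x).
Proof.
  intros Hx Hx2.
  assert (Hq : (2 + x) * fine_fun x ^ 2 - (1 + 2 * x) * fine_fun x + x = 0).
  { assert (Hs : sqrt (1 - 4 * x) ^ 2 = 1 - 4 * x) by (rewrite <- Rsqr_pow2; apply Rsqr_sqrt; lra).
    unfold fine_fun. field_simplify; [|lra].
    rewrite Hs. field. lra. }
  unfold fine_poly. lra.
Qed.

Lemma PS_coef_eq_of_is_pseries (a b : nat -> R) (f : R -> R) (r : R) : 0 < r ->
  (forall x, Rabs x < r -> is_pseries a x (f x)) ->
  (forall x, Rabs x < r -> is_pseries b x (f x)) ->
  a = b.
Proof.
  intros Hr Ha Hb. apply functional_extensionality. intros n.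
  assert (H0 : Rabs 0 < r) by (rewrite Rabs_R0; exact Hr).
  apply PSeries_ext_recip.
  - rewrite <- Rabs_R0. exact (CV_radius_gt_of_is_pseries a f r 0 Ha H0).
  - rewrite <- Rabs_R0. exact (CV_radius_gt_of_is_pseries b f r 0 Hb H0).
  - exists (mkposreal r Hr). intros y Hy.
    assert (Hyr : Rabs y < r)
      by (change (Rabs (y - 0) < r) in Hy; rewrite Rminus_0_r in Hy; exact Hy).
    rewrite (is_pseries_unique a y (f y) (Ha y Hyr)), (is_pseries_unique b y (f y) (Hb y Hyr)).
    reflexivity.
Qed.

Lemma fine_gf_fixpoint F : fine_gf F -> PS_incr_1 F = fine_map (PS_incr_1 F).
Proof.
  intros (r & Hr & HF).
  assert (Ha : forall x, Rabs x < r -> is_pseries (PS_incr_1 F) x (fine_fun x)).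
  { intros x Hx. apply is_pseries_R. eapply is_series_ext; [|exact (HF x Hx)].
    intros [|n]; [change (0 = 0 * x ^ 0); ring | reflexivity]. }
  set (r' := Rmin r (1 / 4)).
  assert (Hr' : forall x, Rabs x < r' -> Rabs x < r /\ Rabs x < 1 / 4).
  { intros x Hx. unfold r' in Hx.
    pose proof (Rmin_l r (1 / 4)). pose proof (Rmin_r r (1 / 4)). lra. }
  apply (PS_coef_eq_of_is_pseries _ _ fine_fun r').
  - apply Rmin_glb_lt; lra.
  - intros x Hx. apply Ha, Hr', Hx.
  - intros x Hx. destruct (Hr' x Hx) as [Hxr Hx4]. apply Rabs_def2 in Hx4.
    rewrite fine_fun_fixpoint by lra.
    apply is_pseries_fine_map; [apply Ha, Hxr|].
    exact (CV_radius_gt_of_is_pseries _ fine_fun r x Ha Hxr).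
Qed.

Lemma tree_count_fixpoint : tree_count = fine_map tree_count.
Proof. exact (fine_map_of_system _ _ tree_count_eq forest_count_eq). Qed.

Theorem corollary2p4 (F : nat -> R) (HF : fine_gf F) (n : nat) (hn : (1 <= n)%nat) :
  exists Xn : list ptree,
    NoDup Xn /\
    (forall t : ptree, In t Xn <-> (in_X t /\ leaves t = n)) /\
    INR (length Xn) = F (n - 1)%nat.
Proof.
  destruct (trees_enum n) as [Hnodup Hin].
  exists (trees n). split; [exact Hnodup|]. split; [exact Hin|].
  assert (Hcount : tree_count = PS_incr_1 F).
  { apply fine_map_fixpoint_unique;
      [exact tree_count_0 | reflexivity | exact tree_count_fixpoint |
       exact (fine_gf_fixpoint F HF)]. }
  change (INR (length (trees n))) with (tree_count n). rewrite Hcount.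
  destruct n as [|m]; [lia|]. simpl. rewrite Nat.sub_0_r. reflexivity.
Qed.
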